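(* Let $r=\frac{1}{2\pi}$ and let $F$ be the regular $500$-gon with vertices $\bigl(r\cos\frac{k\pi}{250}, r\sin\frac{k\pi}{250}\bigr)$, $k=0,\dots,499$. For $z=(x_1,y_1,x_2,y_2,\theta)\in\mathbb{R}^5$ let $R(z)$ be the closed rectangle with sides parallel to the coordinate axes, center $(x_1,y_1)$, horizontal side length $0.4625$ and vertical side length $0.0375$, and let $T(z)$ be the closed equilateral triangle with vertices $\bigl(x_2+\frac{\sqrt3}{9}\cos(\theta+\frac{2\pi j}{3}),\, y_2+\frac{\sqrt3}{9}\sin(\theta+\frac{2\pi j}{3})\bigr)$, $j=0,1,2$ (side length $\frac13$). Let $f(z)$ be the area of the convex hull of $F\cup R(z)\cup T(z)$. Then $f$ is a convex function of each of the coordinates $x_1$, $y_1$, $x_2$, $y_2$ separately (with the other four coordinates fixed). *)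

From HB Require Import structures.
From mathcomp Require Import all_boot all_order all_algebra.
From mathcomp Require Import all_classical all_reals all_analysis.
Set Implicit Arguments. Unset Strict Implicit. Unset Printing Implicit Defensive.
Import Order.TTheory GRing.Theory Num.Theory.
Local Open Scope classical_set_scope.
Local Open Scope ring_scope.

Definition conv_hull {R : realType} (S : set (R * R)) : set (R * R) :=
  [set p | exists n (w : 'I_n -> R) (q : 'I_n -> R * R),
     [/\ (forall i, 0 <= w i), \sum_(i < n) w i = 1, (forall i, S (q i)) &
         p = (\sum_(i < n) w i * (q i).1, \sum_(i < n) w i * (q i).2)]].

Definition area {R : realType} (A : set (R * R)) : R :=
  fine (((@lebesgue_measure R) \x (@lebesgue_measure R)) A)%E.

Definition rr {R : realType} : R := (2 * pi)^-1.

Definition F500 {R : realType} : set (R * R) :=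
  conv_hull [set p | exists k : nat, (k < 500)%N /\
     p = (rr * cos (k%:R * pi / 250), rr * sin (k%:R * pi / 250))].

Definition Rect {R : realType} (x1 y1 : R) : set (R * R) :=
  [set p | `|p.1 - x1| <= (4625 / 10000) / 2 /\ `|p.2 - y1| <= (375 / 10000) / 2].

Definition Tri {R : realType} (x2 y2 theta : R) : set (R * R) :=
  conv_hull [set p | exists j : nat, (j < 3)%N /\
     p = (x2 + Num.sqrt 3 / 9 * cos (theta + 2 * pi * j%:R / 3),
          y2 + Num.sqrt 3 / 9 * sin (theta + 2 * pi * j%:R / 3))].

Definition fz {R : realType} (x1 y1 x2 y2 theta : R) : R :=
  area (conv_hull (F500 `|` Rect x1 y1 `|` Tri x2 y2 theta)).

Definition convex_R {R : realType} (g : R -> R) : Prop :=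
  @convex_function R R^o setT (g : convex_lmodType R^o -> R^o).

From HB Require Import structures.
From mathcomp Require Import all_boot all_order all_algebra.
From mathcomp Require Import all_classical all_reals all_analysis.
From mathcomp Require Import measurable_realfun ring lra.
Set Implicit Arguments. Unset Strict Implicit. Unset Printing Implicit Defensive.
Import Order.TTheory GRing.Theory Num.Theory.
Import numFieldNormedType.Exports.
Local Open Scope classical_set_scope.
Local Open Scope ring_scope.

(* Moving the rectangle (or the triangle) rigidly along a coordinate direction v
   while the other pieces stay fixed makes every point of the union move along v
   at speed 0 or 1; taking convex combinations, every point of the convex hull
   then moves along v at a constant speed of its own.  Hence, on each line
   parallel to v, the chord of the hull at the parameter a t + (1 - a) s lies in
   the Minkowski combination a C_t + (1 - a) C_s of the chords at t and s.
   Chords of convex sets are intervals, so their lengths are convex in the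
   parameter, and integrating over the parallel lines (Fubini) so is the area.
   Compactness of the hulls gives measurability and finiteness of all areas. *)

Section convex_hull.
Variable R : realType.
Implicit Types (S C : set (R * R)) (p q : R * R).

Definition comb (l : R) p q : R * R := l *: p + (1 - l) *: q.

Definition is_convex C := forall l p q, 0 <= l <= 1 -> C p -> C q -> C (comb l p q).

Lemma comb_fst l p q : (comb l p q).1 = l * p.1 + (1 - l) * q.1.
Proof. by []. Qed.

Lemma comb_snd l p q : (comb l p q).2 = l * p.2 + (1 - l) * q.2.
Proof. by []. Qed.

Lemma sum_scale_pair n (w : 'I_n -> R) (u : 'I_n -> R * R) :
  \sum_(i < n) w i *: u i = (\sum_(i < n) w i * (u i).1, \sum_(i < n) w i * (u i).2).
Proof.
have sum_fst := big_morph (@fst R R) (id1 := 0) (op1 := +%R) (op2 := +%R) (fun _ _ => erefl).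
have sum_snd := big_morph (@snd R R) (id1 := 0) (op1 := +%R) (op2 := +%R) (fun _ _ => erefl).
by apply: injective_projections; rewrite /= ?sum_fst ?sum_snd.
Qed.

Lemma conv_hullP S p : conv_hull S p <->
  exists n (w : 'I_n -> R) (u : 'I_n -> R * R), [/\ (forall i, 0 <= w i),
    \sum_(i < n) w i = 1, (forall i, S (u i)) & p = \sum_(i < n) w i *: u i].
Proof.
by split=> -[n [w [u [w0 w1 Su ->]]]]; exists n, w, u; rewrite ?sum_scale_pair.
Qed.

Lemma subset_conv_hull S : S `<=` conv_hull S.
Proof.
move=> p Sp; apply/conv_hullP; exists 1%N, (fun=> 1), (fun=> p).
by rewrite !big_ord1 scale1r.
Qed.

Lemma conv_hull_convex S : is_convex (conv_hull S).
Proof.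
move=> l _ _ /andP[l0 l1] /conv_hullP[n [w [u [w0 w1 Su ->]]]]
  /conv_hullP[m [w' [u' [w0' w1' Su' ->]]]].
pose W (s : 'I_n + 'I_m) := match s with inl i => l * w i | inr j => (1 - l) * w' j end.
pose U (s : 'I_n + 'I_m) := match s with inl i => u i | inr j => u' j end.
have sum_split (V : zmodType) (F : 'I_n + 'I_m -> V) :
    \sum_(i < n + m) F (fintype.split i) = \sum_(i < n) F (inl i) + \sum_(i < m) F (inr i).
  rewrite big_split_ord; congr (_ + _); apply: eq_bigr => i _.
    by rewrite (unsplitK (inl i : 'I_n + 'I_m)).
  by rewrite (unsplitK (inr i : 'I_n + 'I_m)).
apply/conv_hullP; exists (n + m)%N, (W \o fintype.split), (U \o fintype.split); split => /=.
- by move=> i; case: fintype.split => j /=; apply: mulr_ge0 => //; lra.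
- by rewrite (sum_split _ W) /= -!mulr_sumr w1 w1'; lra.
- by move=> i; case: fintype.split.
- by rewrite (sum_split _ (fun s => W s *: U s)) /comb !scaler_sumr; congr (_ + _);
    apply: eq_bigr => i _; rewrite scalerA.
Qed.

Lemma convex_add_scaled C a1 a2 (x y : R) : is_convex C -> C a1 -> C a2 -> 0 <= x -> 0 <= y ->
  exists2 a, C a & x *: a1 + y *: a2 = (x + y) *: a.
Proof.
move=> cC Ca1 Ca2 x0 y0; have [xy0|xy0] := eqVneq (x + y) 0.
  have [-> ->] : x = 0 /\ y = 0 by split; lra.
  by exists a1 => //; rewrite addr0 !scale0r addr0.
have xy : 0 < x + y by rewrite lt_neqAle eq_sym xy0 addr_ge0.
exists (comb (x / (x + y)) a1 a2).
  apply: cC => //; rewrite divr_ge0 ?addr_ge0 //= ler_pdivrMr // mul1r; lra.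
rewrite /comb scalerDr !scalerA; congr (_ *: _ + _ *: _); field; exact: lt0r_neq0.
Qed.

Lemma convex_sum_scaled C c0 n (w : 'I_n -> R) (u : 'I_n -> R * R) :
  is_convex C -> C c0 -> (forall i, 0 <= w i) -> (forall i, C (u i)) ->
  exists2 a, C a & \sum_(i < n) w i *: u i = (\sum_(i < n) w i) *: a.
Proof.
move=> cC Cc0; elim: n w u => [|n IH] w u w0 Cu.
  by exists c0; rewrite // !big_ord0 scale0r.
rewrite !big_ord_recr /=.
have [a Ca ->] := IH _ _ (fun i => w0 (widen_ord (leqnSn n) i))
  (fun i => Cu (widen_ord (leqnSn n) i)).
have s0 : 0 <= \sum_(i < n) w (widen_ord (leqnSn n) i) by exact: sumr_ge0.
have [b Cb ->] := convex_add_scaled cC Ca (Cu ord_max) s0 (w0 ord_max).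
by exists b.
Qed.

Lemma conv_hull_sub_convex S C : is_convex C -> S `<=` C -> conv_hull S `<=` C.
Proof.
move=> cC SC p /conv_hullP[[|n] [w [u [w0 w1 Su ->]]]].
  by move: w1; rewrite big_ord0 => /eqP; rewrite eq_sym oner_eq0.
have [a Ca ->] := convex_sum_scaled cC (SC _ (Su ord0)) w0 (fun i => SC _ (Su i)).
by rewrite w1 scale1r.
Qed.

Lemma conv_hull_id C : is_convex C -> conv_hull C = C.
Proof.
by move=> cC; apply/seteqP; split; [exact: conv_hull_sub_convex|exact: subset_conv_hull].
Qed.

Lemma conv_hullU S1 S2 : conv_hull (conv_hull S1 `|` conv_hull S2) = conv_hull (S1 `|` S2).
Proof.
have sub_hullU S : S `<=` S1 `|` S2 -> conv_hull S `<=` conv_hull (S1 `|` S2).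
  by move=> SS; apply: conv_hull_sub_convex; [exact: conv_hull_convex|apply: subset_trans SS _;
    exact: subset_conv_hull].
apply/seteqP; split; apply: conv_hull_sub_convex; try exact: conv_hull_convex.
- by move=> p [] /sub_hullU; apply => ? ?; [left|right].
- by move=> p [] Sp; apply: subset_conv_hull; [left|right]; exact: subset_conv_hull.
Qed.

Lemma convex_set1 p : is_convex [set p].
Proof. by move=> l _ _ _ -> ->; rewrite /comb -scalerDl subrKC scale1r. Qed.

Lemma conv_hull_translate S S' d p : (forall u, S u -> S' (u + d)) ->
  conv_hull S p -> conv_hull S' (p + d).
Proof.
move=> SS' /conv_hullP[n [w [u [w0 w1 Su ->]]]]; apply/conv_hullP.
exists n, w, (fun i => u i + d); split => //; first by move=> i; apply: SS'.
by rewrite (eq_bigr _ (fun i _ => scalerDr _ _ _)) big_split -scaler_suml w1 scale1r.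
Qed.

Definition conv_join C1 C2 : set (R * R) :=
  [set p | exists l a b, [/\ 0 <= l <= 1, C1 a, C2 b & p = comb l a b]].

Lemma conv_join_convex C1 C2 : is_convex C1 -> is_convex C2 -> is_convex (conv_join C1 C2).
Proof.
move=> c1 c2 m _ _ /andP[m0 m1] [l1 [a1 [b1 [/andP[l10 l11] Ca1 Cb1 ->]]]]
  [l2 [a2 [b2 [/andP[l20 l21] Ca2 Cb2 ->]]]].
have [m0' l10' l20'] : [/\ 0 <= 1 - m, 0 <= 1 - l1 & 0 <= 1 - l2] by split; lra.
have [a Ca eq_a] := convex_add_scaled c1 Ca1 Ca2 (mulr_ge0 m0 l10) (mulr_ge0 m0' l20).
have [b Cb eq_b] := convex_add_scaled c2 Cb1 Cb2 (mulr_ge0 m0 l10') (mulr_ge0 m0' l20').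
exists (m * l1 + (1 - m) * l2), a, b; split => //.
  by apply/andP; split; nra.
rewrite /comb !scalerDr !scalerA addrACA eq_a eq_b; congr (_ + _ *: _); ring.
Qed.

Lemma conv_hullU_join C1 C2 : is_convex C1 -> is_convex C2 -> C1 !=set0 -> C2 !=set0 ->
  conv_hull (C1 `|` C2) = conv_join C1 C2.
Proof.
move=> c1 c2 [a0 Ca0] [b0 Cb0]; apply/seteqP; split.
  apply: conv_hull_sub_convex; first exact: conv_join_convex.
  move=> p [Cp|Cp]; [exists 1, p, b0|exists 0, a0, p]; split;
    by rewrite ?ler01 ?lexx // /comb ?subrr ?subr0 ?scale0r ?scale1r ?addr0 ?add0r.
move=> _ [l [a [b [l01 Ca Cb ->]]]].
by apply: conv_hull_convex => //; apply: subset_conv_hull; [left|right].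
Qed.

Lemma comb_continuous : continuous (fun z : R * ((R * R) * (R * R)) => comb z.1 z.2.1 z.2.2).
Proof.
move=> z; apply: cvgD; apply: cvgZ.
- exact: cvg_fst.
- exact: (cvg_comp _ _ cvg_snd cvg_fst).
- by apply: cvgB; [exact: cvg_cst|exact: cvg_fst].
- exact: (cvg_comp _ _ cvg_snd cvg_snd).
Qed.

Lemma conv_join_compact C1 C2 : compact C1 -> compact C2 -> compact (conv_join C1 C2).
Proof.
move=> k1 k2.
have -> : conv_join C1 C2 = (fun z => comb z.1 z.2.1 z.2.2) @` (`[0, 1] `*` (C1 `*` C2)).
  apply/seteqP; split.
    by move=> _ [l [a [b [l01 Ca Cb ->]]]]; exists (l, (a, b)); rewrite //= in_itv.
  by move=> _ [[l [a b]] [/= + [/= Ca Cb]] <-]; rewrite in_itv => l01; exists l, a, b.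
apply: continuous_compact; first exact/continuous_subspaceT/comb_continuous.
by apply: compact_setX; [exact: segment_compact|exact: compact_setX].
Qed.

Lemma compact_conv_hullU S1 S2 :
  compact (conv_hull S1) -> compact (conv_hull S2) -> compact (conv_hull (S1 `|` S2)).
Proof.
move=> k1 k2; rewrite -conv_hullU.
have [->|/set0P n1] := eqVneq (conv_hull S1) set0.
  by rewrite set0U conv_hull_id //; exact: conv_hull_convex.
have [->|/set0P n2] := eqVneq (conv_hull S2) set0.
  by rewrite setU0 conv_hull_id //; exact: conv_hull_convex.
by rewrite conv_hullU_join //; [exact: conv_join_compact|exact: conv_hull_convex..].
Qed.

Lemma compact_conv_hull_finite (f : nat -> R * R) N :
  compact (conv_hull [set p | exists k, (k < N)%N /\ p = f k]).
Proof.
elim: N => [|N IH].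
  have -> : [set p | exists k, (k < 0)%N /\ p = f k] = set0.
    by apply/seteqP; split => // p [k []]; rewrite ltn0.
  by rewrite conv_hull_id; [exact: compact0|move=> ? ? ? _ []].
rewrite (_ : [set p | _] = [set p | exists k, (k < N)%N /\ p = f k] `|` [set f N]).
  apply: compact_conv_hullU => //.
  by rewrite conv_hull_id; [exact: compact_set1|exact: convex_set1].
apply/seteqP; split => p.
  by case=> k [+ ->]; rewrite ltnS leq_eqVlt => /orP[/eqP ->|kN]; [right|left; exists k].
by case=> [[k [kN ->]]|->]; [exists k; split => //; exact: ltnW|exists N].
Qed.

End convex_hull.

Section parallel_motion.
Variable R : realType.
Implicit Types (v p : R * R) (S : R -> set (R * R)).

Definition parallel_motion v S :=
  forall r p, S r p -> exists sg : R, forall t, S t (p + ((t - r) * sg) *: v).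

Lemma parallel_motion_uniform v S (sg : R) :
  (forall r t p, S r p -> S t (p + ((t - r) * sg) *: v)) -> parallel_motion v S.
Proof. by move=> HS r p Srp; exists sg => t; exact: HS. Qed.

Lemma parallel_motionU v S1 S2 : parallel_motion v S1 -> parallel_motion v S2 ->
  parallel_motion v (fun t => S1 t `|` S2 t).
Proof. by move=> m1 m2 r p [/m1|/m2] [sg H]; exists sg => t; [left|right]. Qed.

Lemma parallel_motion_conv_hull v S : parallel_motion v S ->
  parallel_motion v (fun t => conv_hull (S t)).
Proof.
move=> mS r _ /conv_hullP[n [w [u [w0 w1 Su ->]]]].
have [c Hc] := fin_all_exists (fun i => mS r (u i) (Su i)).
(* A convex combination moves at the weighted average of the speeds of its points. *)
exists (\sum_(i < n) w i * c i) => t; apply/conv_hullP.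
exists n, w, (fun i => u i + ((t - r) * c i) *: v); split => //.
rewrite (eq_bigr _ (fun i _ => scalerDr _ _ _)) big_split /=; congr (_ + _).
by rewrite mulr_sumr scaler_suml; apply: eq_bigr => i _; rewrite scalerA mulrCA.
Qed.

Lemma add_scale_e1 (x y c : R) : (x, y) + c *: (1, 0) = (x + c, y).
Proof. by rewrite -[LHS]/(x + c * 1, y + c * 0) mulr1 mulr0 addr0. Qed.

Lemma add_scale_e2 (x y c : R) : (x, y) + c *: (0, 1) = (x, y + c).
Proof. by rewrite -[LHS]/(x + c * 0, y + c * 1) mulr1 mulr0 addr0. Qed.

End parallel_motion.

Section real_line.
Variable R : realType.
Local Notation lam := (@lebesgue_measure R).
Implicit Types X Y Z : set R.

Lemma inf_le_sup X : X !=set0 -> has_lbound X -> has_ubound X -> inf X <= sup X.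
Proof. by move=> [x Xx] hl hu; apply: (le_trans (ge_inf hl Xx)); exact: ub_le_sup. Qed.

Lemma lebesgue_measure_itvcc (a b : R) : a <= b -> lam `[a, b] = (b - a)%:E.
Proof.
move=> ab; apply: (etrans (lebesgue_measure_itv _)); rewrite /= lte_fin.
by case: ltgtP ab => // -> _; rewrite subrr.
Qed.

Lemma lebesgue_measure_le_sup_inf X : measurable X -> X !=set0 ->
  has_lbound X -> has_ubound X -> (lam X <= (sup X - inf X)%:E)%E.
Proof.
move=> mX X0 hl hu; rewrite -lebesgue_measure_itvcc ?inf_le_sup //.
have mI : measurable (`[inf X, sup X]%classic : set R) by exact: measurable_itv.
apply: le_measure; [exact: mem_set|exact: mem_set mI|].
by move=> x Xx; rewrite /= in_itv /= ge_inf ?ub_le_sup.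
Qed.

Lemma lebesgue_measure_interval X : is_interval X -> X !=set0 ->
  has_lbound X -> has_ubound X -> lam X = (sup X - inf X)%:E.
Proof.
move=> iX X0 hl hu; rewrite {1}(is_intervalP X).1 //.
apply: (etrans (lebesgue_measure_itv _)); rewrite /Rhull (asboolT hl) (asboolT hu) /= lte_fin.
by case: ltgtP (inf_le_sup X0 hl hu) => // -> _; rewrite subrr.
Qed.

Lemma lebesgue_measure_le_comb X Y Z (a M : R) : 0 <= a <= 1 -> measurable X ->
  is_interval Y -> is_interval Z ->
  (forall y, Y y -> `|y| <= M) -> (forall z, Z z -> `|z| <= M) ->
  (forall x, X x -> exists y z, [/\ Y y, Z z & x = a * y + (1 - a) * z]) ->
  (lam X <= a%:E * lam Y + (1 - a)%:E * lam Z)%E.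
Proof.
move=> /andP[a0 a1] mX iY iZ YM ZM XYZ.
have [->|/set0P X0] := eqVneq X set0.
  by rewrite measure0 adde_ge0 // mule_ge0 // lee_fin subr_ge0.
have [x0 /XYZ[y0 [z0 [Yy0 Zz0 _]]]] := X0.
have bounded W : (forall w, W w -> `|w| <= M) -> has_lbound W /\ has_ubound W.
  by move=> WM; split; [exists (- M)|exists M] => w /WM; rewrite ler_norml => /andP[].
have [[hlY huY] [hlZ huZ]] := (bounded _ YM, bounded _ ZM).
have supX : ubound X (a * sup Y + (1 - a) * sup Z).
  move=> _ /XYZ[y [z [Yy Zz ->]]].
  by apply: lerD; apply: ler_wpM2l; rewrite ?subr_ge0 // ub_le_sup.
have infX : lbound X (a * inf Y + (1 - a) * inf Z).
  move=> _ /XYZ[y [z [Yy Zz ->]]].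
  by apply: lerD; apply: ler_wpM2l; rewrite ?subr_ge0 // ge_inf.
apply: (le_trans (lebesgue_measure_le_sup_inf mX X0 (ex_intro _ _ infX) (ex_intro _ _ supX))).
rewrite !lebesgue_measure_interval //; [|by exists z0|by exists y0].
have := ge_sup X0 supX; have := lb_le_inf X0 infX.
by rewrite -!EFinM -EFinD lee_fin; lra.
Qed.

Lemma ge0_integral_le_comb (f g h : R -> \bar R) (a : R) : 0 <= a <= 1 ->
  measurable_fun setT f -> measurable_fun setT g -> measurable_fun setT h ->
  (forall x, 0 <= f x)%E -> (forall x, 0 <= g x)%E -> (forall x, 0 <= h x)%E ->
  (forall x, h x <= a%:E * f x + (1 - a)%:E * g x)%E ->
  (\int[lam]_x h x <= a%:E * \int[lam]_x f x + (1 - a)%:E * \int[lam]_x g x)%E.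
Proof.
move=> /andP[a0 a1] mf mg mh f0 g0 h0 hfg.
have a0' : 0 <= 1 - a by rewrite subr_ge0.
rewrite -ge0_integralZl_EFin // -[X in (_ + X)%E]ge0_integralZl_EFin //.
rewrite -ge0_integralD //; last 4 first.
- by move=> x _; apply: mule_ge0; rewrite ?lee_fin.
- exact: measurable_funeM.
- by move=> x _; apply: mule_ge0; rewrite ?lee_fin.
- exact: measurable_funeM.
by apply: ge0_le_integral => //; apply: emeasurable_funD; exact: measurable_funeM.
Qed.

End real_line.

Section area.
Variable R : realType.
Local Notation lam := (@lebesgue_measure R).
Local Notation R2 := (measurableTypeR R * measurableTypeR R)%type.
Local Notation lam2 := ((@lebesgue_measure R) \x (@lebesgue_measure R))%E.
Implicit Types (A K U : set (R * R)) (S : R -> set (R * R)).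

Definition rat_rect (q : (rat * rat) * (rat * rat)) : set (R * R) :=
  `]ratr q.1.1, ratr q.1.2[ `*` `]ratr q.2.1, ratr q.2.2[.

Lemma nbhs_rat_itv (x : R) (B : set R) : nbhs x B ->
  exists a b : rat, ratr a < x < ratr b /\ `]ratr a, ratr b[ `<=` B.
Proof.
move=> /nbhs_ballP[e /= e0 xeB].
have [a] : exists a : rat, ratr a \in `]x - e, x[ by apply: rat_in_itvoo; lra.
have [b] : exists b : rat, ratr b \in `]x, x + e[ by apply: rat_in_itvoo; lra.
rewrite !in_itv /= => /andP[xb be] /andP[ea ax].
exists a, b; rewrite ax xb; split => // y; rewrite /= in_itv /= => /andP[ay yb].
by apply: xeB; rewrite ball_itv /= in_itv /=; apply/andP; split; lra.
Qed.

Lemma open_rat_rect_cover U : open U ->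
  U = \bigcup_(q in [set q | rat_rect q `<=` U]) rat_rect q.
Proof.
move=> oU; apply/seteqP; split => [p Up|p [q /= qU /qU] //].
have [[B1 B2] /= [nB1 nB2] B12U] := oU p Up.
have [a1 [b1 [p1 sB1]]] := nbhs_rat_itv nB1.
have [a2 [b2 [p2 sB2]]] := nbhs_rat_itv nB2.
exists ((a1, b1), (a2, b2)); last by split; rewrite /= in_itv.
by move=> z [/sB1 ? /sB2 ?]; apply: B12U.
Qed.

Lemma open_measurable_prod U : open U -> measurable (U : set R2).
Proof.
move=> /open_rat_rect_cover ->; rewrite bigcup_mkcond.
apply: countable_bigcupT_measurable => [|q]; first exact: countableP.
by case: ifP => _; [apply: measurableX; exact: measurable_itv|exact: measurable0].
Qed.

Lemma compact_measurable_prod K : compact K -> measurable (K : set R2).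
Proof.
move=> cK; have clK : closed K by apply: compact_closed => //; exact: norm_hausdorff.
have : measurable (~` K : set R2) by apply: open_measurable_prod; exact: closed_openC.
by move/measurableC; rewrite setCK.
Qed.

Lemma compact_coord_bounded K : compact K ->
  exists M, forall p, K p -> `|p.1| <= M /\ `|p.2| <= M.
Proof.
move=> /compact_bounded[M [_ KM]]; exists (`|M| + 1) => p /(KM (`|M| + 1)).
by move=> /(_ (ltr_pwDr ltr01 (ler_norm M))) /=; rewrite prod_normE ge_max => /andP.
Qed.

Lemma compact_product_measure_fin_num K : compact K -> lam2 K \is a fin_num.
Proof.
move=> cK; have [M KM] := compact_coord_bounded cK.
have sub : K `<=` `[- M, M] `*` `[- M, M].
  by move=> p /KM[]; rewrite /= !in_itv /= -!ler_norml => -> ->.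
have fin_I : (lam `[(- M)%R, M] < +oo)%E.
  by apply: compact_finite_measure; exact: segment_compact.
have mIxI : measurable (`[- M, M] `*` `[- M, M] : set R2) by exact: measurableX.
rewrite ge0_fin_numE //.
apply: (@le_lt_trans _ _ (lam2 (`[- M, M] `*` `[- M, M]))).
  exact: (@le_measure _ _ _ lam2 _ _ (mem_set (compact_measurable_prod cK)) (mem_set mIxI) sub).
have -> : lam2 (`[- M, M] `*` `[- M, M]) = (lam `[(- M)%R, M] * lam `[(- M)%R, M])%E.
  by apply: product_measure1E; exact: measurable_itv.
by apply: lte_mul_pinfty; rewrite ?ge0_fin_numE.
Qed.

Lemma area_le_comb A B C (a : R) : compact A -> compact B -> compact C ->
  (lam2 C <= a%:E * lam2 A + (1 - a)%:E * lam2 B)%E ->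
  area C <= a * area A + (1 - a) * area B.
Proof.
move=> /compact_product_measure_fin_num/fineK fA /compact_product_measure_fin_num/fineK fB
  /compact_product_measure_fin_num/fineK fC.
by rewrite -fA -fB -fC -!EFinM -EFinD lee_fin.
Qed.

Lemma product_measure_ysectionE K : compact K -> lam2 K = (\int[lam]_y lam (ysection K y))%E.
Proof.
move=> /compact_measurable_prod mK.
have := indic_fubini_tonelli lam lam mK.
by rewrite indic_fubini_tonelli_FE // indic_fubini_tonelli_GE.
Qed.

Lemma between_comb (u v w : R) : u <= w <= v ->
  exists2 l, 0 <= l <= 1 & w = l * u + (1 - l) * v.
Proof.
move=> /andP[uw wv]; have [uv|uv] := eqVneq u v.
  move: wv; rewrite -uv => wu; exists 1; rewrite ?lexx ?ler01 // subrr mul0r addr0 mul1r.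
  by apply/le_anti; rewrite uw wu.
have uv' : u < v by rewrite lt_neqAle uv (le_trans uw wv).
exists ((v - w) / (v - u)); last by field; rewrite subr_eq0 eq_sym.
by rewrite divr_ge0 ?subr_ge0 ?(ltW uv') //= ler_pdivrMr ?subr_gt0 // mul1r; lra.
Qed.

Lemma is_interval_xsection K x : is_convex K -> is_interval (xsection K x).
Proof.
move=> cK u v; rewrite /xsection /= !inE => Ku Kv w /between_comb[l l01 ->].
suff -> : (x, l * u + (1 - l) * v) = comb l (x, u) (x, v) by apply/mem_set/cK.
by apply: injective_projections; rewrite ?comb_fst ?comb_snd //= -mulrDl subrKC mul1r.
Qed.

Lemma is_interval_ysection K y : is_convex K -> is_interval (ysection K y).
Proof.
move=> cK u v; rewrite /ysection /= !inE => Ku Kv w /between_comb[l l01 ->].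
suff -> : (l * u + (1 - l) * v, y) = comb l (u, y) (v, y) by apply/mem_set/cK.
by apply: injective_projections; rewrite ?comb_fst ?comb_snd //= -mulrDl subrKC mul1r.
Qed.

Lemma convex_R_comb (g : R -> R) :
  (forall a t s, 0 <= a <= 1 -> g (a * t + (1 - a) * s) <= a * g t + (1 - a) * g s) ->
  convex_R g.
Proof. by move=> H l t s _ _; apply: H; rewrite ge0 le1. Qed.

Lemma convex_area_vertical S : (forall t, compact (conv_hull (S t))) ->
  parallel_motion (0, 1) S -> convex_R (fun t => area (conv_hull (S t))).
Proof.
move=> cS /parallel_motion_conv_hull mS; apply: convex_R_comb => a t s a01.
set r := a * t + (1 - a) * s.
have [M KM] := compact_coord_bounded (compactU (cS t) (cS s)).
have mK u := compact_measurable_prod (cS u).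
apply: area_le_comb => //; rewrite /product_measure1 /=.
apply: ge0_integral_le_comb => //; try by [move=> x; exact: measure_ge0|
  exact: (measurable_fun_xsection lam (mK _))].
move=> x; apply: (@lebesgue_measure_le_comb _ _ _ _ _ M) => //.
- exact: measurable_xsection (mK r).
- exact/is_interval_xsection/conv_hull_convex.
- exact/is_interval_xsection/conv_hull_convex.
- by move=> y; rewrite /xsection /= inE => /(fun h => KM _ (or_introl h))[].
- by move=> y; rewrite /xsection /= inE => /(fun h => KM _ (or_intror h))[].
move=> y; rewrite /xsection /= inE => /mS[sg moves].
exists (y + (t - r) * sg), (y + (s - r) * sg); split; rewrite ?inE -?add_scale_e2 //.
by rewrite /r; ring.
Qed.

Lemma convex_area_horizontal S : (forall t, compact (conv_hull (S t))) ->
  parallel_motion (1, 0) S -> convex_R (fun t => area (conv_hull (S t))).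
Proof.
move=> cS /parallel_motion_conv_hull mS; apply: convex_R_comb => a t s a01.
set r := a * t + (1 - a) * s.
have [M KM] := compact_coord_bounded (compactU (cS t) (cS s)).
have mK u := compact_measurable_prod (cS u).
apply: area_le_comb => //; rewrite !product_measure_ysectionE //.
apply: ge0_integral_le_comb => //; try by [move=> y; exact: measure_ge0|
  exact: (measurable_fun_ysection lam (mK _))].
move=> y; apply: (@lebesgue_measure_le_comb _ _ _ _ _ M) => //.
- exact: measurable_ysection (mK r).
- exact/is_interval_ysection/conv_hull_convex.
- exact/is_interval_ysection/conv_hull_convex.
- by move=> x; rewrite /ysection /= inE => /(fun h => KM _ (or_introl h))[].
- by move=> x; rewrite /ysection /= inE => /(fun h => KM _ (or_intror h))[].
move=> x; rewrite /ysection /= inE => /mS[sg moves].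
exists (x + (t - r) * sg), (x + (s - r) * sg); split; rewrite ?inE -?add_scale_e1 //.
by rewrite /r; ring.
Qed.

End area.

Section configuration.
Variable R : realType.
Implicit Types (x y : R) (v p : R * R).

Lemma dist_comb_le (l a b c e : R) : 0 <= l <= 1 ->
  `|a - c| <= e -> `|b - c| <= e -> `|l * a + (1 - l) * b - c| <= e.
Proof.
move=> /andP[l0 l1]; rewrite !ler_distl => /andP[? ?] /andP[? ?].
by apply/andP; split; nra.
Qed.

Lemma Rect_convex x y : is_convex (Rect x y).
Proof.
by move=> l p q l01 [p1 p2] [q1 q2]; split; rewrite ?comb_fst ?comb_snd; apply: dist_comb_le.
Qed.

Lemma Rect_compact x y : compact (Rect x y).
Proof.
rewrite /Rect; set h := (_ / 2 : R); set k := (_ / 2 : R).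
have -> : [set p : R * R | `|p.1 - x| <= h /\ `|p.2 - y| <= k] =
    `[x - h, x + h] `*` `[y - k, y + k].
  by apply/seteqP; split => p; rewrite /= !in_itv /= !ler_distl => -[].
by apply: compact_setX; exact: segment_compact.
Qed.

Lemma Rect_translate x y p d : Rect x y p -> Rect (x + d.1) (y + d.2) (p + d).
Proof.
have shift (a b e : R) : a + e - (b + e) = a - b by rewrite opprD addrACA subrr addr0.
by move=> [h1 h2]; split; [rewrite [(p + d).1]/= shift|rewrite [(p + d).2]/= shift].
Qed.

Lemma Tri_translate x y theta p d :
  Tri x y theta p -> Tri (x + d.1) (y + d.2) theta (p + d).
Proof.
apply: conv_hull_translate => _ [j [j3 ->]]; exists j; split => //.
by apply: injective_projections; rewrite [LHS]/= addrAC.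
Qed.

Lemma parallel_motion_fz_hull v (c d : R -> R * R) (sc sd theta : R) :
  (forall r t, c t = c r + ((t - r) * sc) *: v) ->
  (forall r t, d t = d r + ((t - r) * sd) *: v) ->
  parallel_motion v (fun t => F500 `|` Rect (c t).1 (c t).2 `|` Tri (d t).1 (d t).2 theta).
Proof.
move=> hc hd; apply: parallel_motionU; first apply: parallel_motionU.
- by apply: (parallel_motion_uniform (sg := 0)) => r t p; rewrite mulr0 scale0r addr0.
- by apply: (parallel_motion_uniform (sg := sc)) => r t p; rewrite (hc r t); exact: Rect_translate.
- by apply: (parallel_motion_uniform (sg := sd)) => r t p; rewrite (hd r t); exact: Tri_translate.
Qed.

Lemma compact_fz_hull x1 y1 x2 y2 theta :
  compact (conv_hull (F500 `|` Rect x1 y1 `|` Tri x2 y2 theta)).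
Proof.
have compact_polygon (f : nat -> R * R) N :
    compact (conv_hull (conv_hull [set p | exists k, (k < N)%N /\ p = f k])).
  by rewrite conv_hull_id; [exact: compact_conv_hull_finite|exact: conv_hull_convex].
apply: compact_conv_hullU; first apply: compact_conv_hullU.
- exact: compact_polygon.
- by rewrite conv_hull_id; [exact: Rect_compact|exact: Rect_convex].
- exact: compact_polygon.
Qed.

End configuration.

Theorem corollary1 (R : realType) (x1 y1 x2 y2 theta : R) :
  [/\ convex_R (fun t => fz t y1 x2 y2 theta),
      convex_R (fun t => fz x1 t x2 y2 theta),
      convex_R (fun t => fz x1 y1 t y2 theta) &
      convex_R (fun t => fz x1 y1 x2 t theta)].
Proof.
have along_e1 (y r t : R) : (t, y) = (r, y) + ((t - r) * 1) *: (1, 0).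
  by rewrite add_scale_e1 mulr1 subrKC.
have along_e2 (x r t : R) : (x, t) = (x, r) + ((t - r) * 1) *: (0, 1).
  by rewrite add_scale_e2 mulr1 subrKC.
have at_rest (p v : R * R) (r t : R) : p = p + ((t - r) * 0) *: v.
  by rewrite mulr0 scale0r addr0.
split.
- apply: convex_area_horizontal => [t|]; first exact: compact_fz_hull.
  exact: (parallel_motion_fz_hull (c := fun t => (t, y1)) (along_e1 y1) (at_rest (x2, y2) _)).
- apply: convex_area_vertical => [t|]; first exact: compact_fz_hull.
  exact: (parallel_motion_fz_hull (c := fun t => (x1, t)) (along_e2 x1) (at_rest (x2, y2) _)).
- apply: convex_area_horizontal => [t|]; first exact: compact_fz_hull.
  exact: (parallel_motion_fz_hull (d := fun t => (t, y2)) (at_rest (x1, y1) _) (along_e1 y2)).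
- apply: convex_area_vertical => [t|]; first exact: compact_fz_hull.
  exact: (parallel_motion_fz_hull (d := fun t => (x2, t)) (at_rest (x1, y1) _) (along_e2 x2)).
Qed.
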